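(* Let $\Gamma$ be the banana graph of genus $g\ge1$ with vertices $v_1,v_2$ and edges $e_1,\dots,e_n$, $n=g+1$. Let $B\in\mathbb Z^{g\times n}$ with $B_{i,1}=1$, $B_{i,i+1}=-1$, other entries $0$, $Q=BB^T$, and for a vertex $\mathbf a$ of $V_Q$ let $\iota_{\mathbf a}$ be the orientation in which $e_i$ goes from $v_2$ to $v_1$ if $(B^T\mathbf a)_i>0$ and from $v_1$ to $v_2$ if $(B^T\mathbf a)_i<0$. For vertices $\mathbf a,\mathbf a'$ of $V_Q$ and $k\in\{1,\dots,g\}$: $\mathbf a\sim\mathbf a'$ with $\mathbf a,\mathbf a'\in[\mathbf k]$ if and only if both $\iota_{\mathbf a}$ and $\iota_{\mathbf a'}$ have exactly $k$ edges outgoing at $v_1$. Equivalently, for $\mathbf a\ne\mathbf a'$, $\mathbf a\sim\mathbf a'$ if and only if the set of edges whose orientation in $\iota_{\mathbf a'}$ differs from that in $\iota_{\mathbf a}$ forms a circuit in $\iota_{\mathbf a}$ (i.e., these edges can be traversed as a closed directed trail in $\iota_{\mathbf a}$, each edge used once).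
   Context: $V_Q=\{\mathbf a\in\mathbb R^g:\ \mathbf a^TQ\mathbf a\le(\mathbf a-\mathbf c)^TQ(\mathbf a-\mathbf c)\ \forall\mathbf c\in\mathbb Z^g\}$; its vertices are $\bigcup_{k=1}^g[\mathbf k]$ where $[\mathbf k]\subset\mathbb R^g$ is the set of vectors with entries in $\{-\tfrac{k}{g+1},\tfrac{g+1-k}{g+1}\}$ having $k$ or $k-1$ entries equal to $\tfrac{g+1-k}{g+1}$. For a vertex $\mathbf a$, $\mathcal D_{\mathbf a,Q}=\{\mathbf c\in\mathbb Z^g:\mathbf a^TQ\mathbf a=(\mathbf a-\mathbf c)^TQ(\mathbf a-\mathbf c)\}$, and $\mathbf a\sim\mathbf a'$ iff $\mathbf a'=\mathbf a-\mathbf c_0$ for some $\mathbf c_0\in\mathcal D_{\mathbf a,Q}$. The orientations $\iota_{\mathbf a}$ are exactly the strongly connected orientations of $\Gamma$. *)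

(* Coordinates are rationals (all vertices of V_Q and all
   lattice translates are rational). *)
From HB Require Import structures.
From mathcomp Require Import all_boot all_order all_algebra.
Set Implicit Arguments. Unset Strict Implicit. Unset Printing Implicit Defensive.
Import Order.TTheory GRing.Theory Num.Theory.
Local Open Scope ring_scope.

(* Banana graph of genus g: vertices v1, v2 ('I_2), edges e_1..e_n, n = g+1,
   indexed by 'I_(g.+1) (edge e_{j+1} is index j). *)
Definition v1 : 'I_2 := ord0.
Definition v2 : 'I_2 := ord_max.

(* B in Z^{g x n}: B_{i,1} = 1, B_{i,i+1} = -1, other entries 0 (0-based:
   column 0 is e_1, column i.+1 is e_{i+2}). *)
Definition bananaB (g : nat) : 'M[int]_(g, g.+1) :=
  \matrix_(i < g, j < g.+1)
     (if (j == 0 :> nat) then 1 else if (j == i.+1 :> nat) then -1 else 0).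

Definition Bq (g : nat) : 'M[rat]_(g, g.+1) := map_mx (fun z : int => z%:~R) (bananaB g).

Definition bananaQ (g : nat) : 'M[rat]_g := Bq g *m (Bq g)^T.

Definition qform (g : nat) (Q : 'M[rat]_g) (x : 'cV[rat]_g) : rat :=
  (x^T *m Q *m x) 0 0.

Definition intvec (g : nat) (c : 'cV[int]_g) : 'cV[rat]_g :=
  map_mx (fun z : int => z%:~R) c.

Definition kset (g k : nat) (a : 'cV[rat]_g) : Prop :=
  let lo : rat := - (k%:R / (g.+1)%:R) in
  let hi : rat := ((g.+1 - k)%N)%:R / (g.+1)%:R in
  (forall i : 'I_g, a i 0 = lo \/ a i 0 = hi) /\
  (#|[set i : 'I_g | a i 0 == hi]| = k \/ #|[set i : 'I_g | a i 0 == hi]| = k.-1).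
Arguments kset : clear implicits.

(* Vertices of V_Q: the union of [k], k = 1..g (as given in the context). *)
Definition is_vertex (g : nat) (a : 'cV[rat]_g) : Prop :=
  exists2 k : nat, (1 <= k <= g)%N & kset g k a.

Definition DaQ (g : nat) (a : 'cV[rat]_g) (c : 'cV[int]_g) : Prop :=
  qform (bananaQ g) a = qform (bananaQ g) (a - intvec c).

Definition simV (g : nat) (a a' : 'cV[rat]_g) : Prop :=
  exists c0 : 'cV[int]_g, DaQ a c0 /\ a' = a - intvec c0.

Definition BTa (g : nat) (a : 'cV[rat]_g) (j : 'I_g.+1) : rat :=
  ((Bq g)^T *m a) j 0.

(* Orientation iota_a: edge j ↦ (tail, head).  e_j goes v2 -> v1 if
   (B^T a)_j > 0 and v1 -> v2 if (B^T a)_j < 0.  (The value 0 never occurs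
   for vertices of V_Q; we then arbitrarily pick v1 -> v2.) *)
Definition orient (g : nat) (a : 'cV[rat]_g) (j : 'I_g.+1) : 'I_2 * 'I_2 :=
  if 0 < BTa a j then (v2, v1) else (v1, v2).

Definition outdeg_v1 (g : nat) (o : 'I_g.+1 -> 'I_2 * 'I_2) : nat :=
  #|[set j : 'I_g.+1 | (o j).1 == v1]|.

Definition is_circuit (g : nat) (o : 'I_g.+1 -> 'I_2 * 'I_2)
    (S : {set 'I_g.+1}) : Prop :=
  exists s : seq 'I_g.+1,
    [/\ s != [::], uniq s, (forall j, (j \in s) = (j \in S)) &
        cycle (fun e f => (o e).2 == (o f).1) s].

Definition diff_edges (g : nat) (a a' : 'cV[rat]_g) : {set 'I_g.+1} :=
  [set j : 'I_g.+1 | orient a' j != orient a j].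

From HB Require Import structures.
From mathcomp Require Import all_boot all_order all_algebra.
From mathcomp Require Import zify ring lra.
Import Order.TTheory GRing.Theory Num.Theory.
Set Implicit Arguments. Unset Strict Implicit. Unset Printing Implicit Defensive.
Local Open Scope ring_scope.

(* A vertex a of [k] is -k/(g+1) plus the indicator of the set U of its
   coordinates taking the larger value, and B^T a = (sum_i a_i, -a_1, ..., -a_g).
   So e_(i+1) leaves v1 iff i is in U, and e_1 leaves v1 iff |U| = k-1: the
   out-degree at v1 is always k.  Two vertices differ by an integer vector iff
   they lie in the same [k], since -k/(g+1) is their common fractional part, and
   [k] lies on one level set of x^T Q x; hence a ~ a' iff the out-degrees agree.
   In the banana graph a set of edges is a directed circuit iff it is nonempty
   with as many edges leaving v1 as entering it (a closed trail alternates), and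
   reversing the edges of a set S changes the out-degree at v1 by the difference
   of these two numbers. *)

Section AlternatingCycles.
Variables (T : Type) (p : pred T).

Definition alternating : rel T := [rel e f | p e != p f].

Lemma path_alternating_count x s :
  path alternating x s -> count p (belast x s) = count (predC p) s.
Proof.
elim: s x => [|y s IHs] x //= /andP[xy ys].
rewrite /= (IHs y ys); move: xy; rewrite /alternating /=.
by case: (p x); case: (p y).
Qed.

Lemma cycle_alternating_count s :
  cycle alternating s -> count p s = count (predC p) s.
Proof.
case: s => [|x s] // /path_alternating_count.
by rewrite belast_rcons -cats1 count_cat /= addn0 => ->; rewrite addnC.
Qed.

Fixpoint interleave (A B : seq T) : seq T :=
  if (A, B) is (a :: A', b :: B') then a :: b :: interleave A' B' else [::].

Lemma path_interleave x A B :
  size A = size B -> all (predC p) A -> all p B -> p x ->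
  path alternating x (interleave A B) && p (last x (interleave A B)).
Proof.
elim: A B x => [|a A IHA] [|b B] x //= [AB] /andP[pa pA] /andP[pb pB] px.
have /andP[-> ->] := IHA B b AB pA pB pb.
by rewrite /alternating /= px pb (negbTE pa).
Qed.

End AlternatingCycles.

Lemma perm_interleave (T : eqType) (A B : seq T) :
  size A = size B -> perm_eq (interleave A B) (A ++ B).
Proof.
elim: A B => [|a A IHA] [|b B] //= [AB].
by rewrite perm_cons perm_sym -[b :: B]cat1s perm_catCA perm_cons perm_sym IHA.
Qed.

Lemma count_uniq_card (T : finType) (q : pred T) (s : seq T) (S : {set T}) :
  uniq s -> s =i S -> count q s = #|[set j in S | q j]|.
Proof.
move=> us sS; rewrite -size_filter -(card_uniqP (filter_uniq q us)).
by apply: eq_card => j; rewrite mem_filter inE sS andbC.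
Qed.

Lemma alternating_cycleP (T : finType) (p : pred T) (S : {set T}) :
  (exists s, [/\ s != [::], uniq s, s =i S & cycle (alternating p) s]) <->
  S != set0 /\ #|[set j in S | ~~ p j]| = #|[set j in S | p j]|.
Proof.
split.
  case=> -[|x s] [] // _ us sS cyc; split.
    by apply/set0Pn; exists x; rewrite -sS mem_head.
  by rewrite -!(count_uniq_card _ us sS) (cycle_alternating_count cyc).
case=> /set0Pn[x xS] balanced.
have A0 : (0 < #|[set j in S | ~~ p j]|)%N.
  case px: (p x); [rewrite balanced|];
    by apply/card_gt0P; exists x; rewrite inE xS px.
set A := enum [set j in S | ~~ p j]; set B := enum [set j in S | p j].
have AB : size A = size B by rewrite -!cardE.
have pA : all (predC p) A by apply/allP => j; rewrite mem_enum inE => /andP[].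
have pB : all p B by apply/allP => j; rewrite mem_enum inE => /andP[].
have perm_AB := perm_interleave AB.
exists (interleave A B); split.
- by move: A0; rewrite cardE -/A; case: (A) (B) AB => [|a A'] [|b B'].
- rewrite (perm_uniq perm_AB) cat_uniq !enum_uniq andbT.
  by apply/hasPn => j; rewrite !mem_enum !inE => /andP[_ ->]; rewrite andbF.
- by move=> j; rewrite (perm_mem perm_AB) mem_cat !mem_enum !inE -andb_orr orNb andbT.
move: A0; rewrite cardE -/A.
case: (A) (B) AB pA pB => [|a A'] [|b B'] //= [AB'] /andP[pa pA'] /andP[pb pB'] _.
rewrite rcons_path; have /andP[-> plast] := path_interleave AB' pA' pB' pb.
by rewrite /alternating /= pb (negbTE pa) plast.
Qed.

Definition banana_orient (T : Type) (p : pred T) (j : T) : 'I_2 * 'I_2 :=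
  if p j then (v2, v1) else (v1, v2).

Lemma banana_orient_neq (T : Type) (p p' : pred T) j :
  (banana_orient p' j != banana_orient p j) = (p' j != p j).
Proof. by rewrite /banana_orient; case: (p j); case: (p' j). Qed.

Lemma outdeg_banana_orient n (p : pred 'I_n.+1) :
  outdeg_v1 (banana_orient p) = #|[set j | ~~ p j]|.
Proof. by apply: eq_card => j; rewrite !inE /banana_orient; case: (p j). Qed.

Lemma circuit_banana_orientP n (p : pred 'I_n.+1) (S : {set 'I_n.+1}) :
  is_circuit (banana_orient p) S <->
  S != set0 /\ #|[set j in S | ~~ p j]| = #|[set j in S | p j]|.
Proof.
have link :
    (fun e f => (banana_orient p e).2 == (banana_orient p f).1) =2 alternating p.
  by move=> e f; rewrite /banana_orient /alternating /=; case: (p e); case: (p f).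
rewrite -alternating_cycleP.
by split=> -[s [s0 us sS cyc]]; exists s; split; rewrite // ?(eq_cycle link) in cyc *.
Qed.

Lemma eq_card_predC_flips (T : finType) (p p' : pred T) :
  #|[set j | ~~ p j]| = #|[set j | ~~ p' j]| <->
  #|[set j in [set j | p' j != p j] | ~~ p j]| =
  #|[set j in [set j | p' j != p j] | p j]|.
Proof.
set D := [set j | p' j != p j].
have split_D (q : pred T) :
    #|[set j | q j]| = (#|[set j in D | q j]| + #|[set j in ~: D | q j]|)%N.
  rewrite -(cardsID D [set j | q j]); congr (_ + _)%N; apply: eq_card => j.
    by rewrite !inE andbC.
  by rewrite !inE andbC.
rewrite (split_D (predC p)) (split_D (predC p')).
have -> : [set j in D | ~~ p' j] = [set j in D | p j].
  by apply/setP => j; rewrite !inE; case: (p j); case: (p' j).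
have -> : [set j in ~: D | ~~ p' j] = [set j in ~: D | ~~ p j].
  by apply/setP => j; rewrite !inE; case: (p j); case: (p' j).
by split=> [/addIn | ->].
Qed.

Lemma card_set_sum (T : finType) (P : pred T) : #|[set j | P j]| = (\sum_j P j)%N.
Proof.
rewrite cardsE -sum1_card big_mkcond /=.
by apply: eq_bigr => j _; rewrite unfold_in; case: (P j).
Qed.

Lemma card_set_ord_recl n (P : pred 'I_n.+1) :
  #|[set j | P j]| = (P ord0 + #|[set i : 'I_n | P (lift ord0 i)]|)%N.
Proof. by rewrite !card_set_sum big_ord_recl. Qed.

Section BananaLattice.
Variable g : nat.
Implicit Types (a x : 'cV[rat]_g) (k : nat).

Definition into_v1 a : pred 'I_g.+1 := fun j => 0 < BTa a j.

Lemma orientE a : orient a = banana_orient (into_v1 a).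
Proof. by []. Qed.

Lemma BTa_ord0 x : BTa x ord0 = \sum_i x i 0.
Proof. by rewrite /BTa mxE; apply: eq_bigr => i _; rewrite !mxE mul1r. Qed.

Lemma BTa_lift x i : BTa x (lift ord0 i) = - x i 0.
Proof.
rewrite /BTa mxE (bigD1 i) //= big1 ?addr0 => [|j ji]; rewrite !mxE /=.
  by rewrite /bump leq0n add1n eqxx mulrN1z mulN1r.
suff -> : (bump 0 i == j.+1)%N = false by rewrite mul0r.
by rewrite /bump leq0n add1n eqSS eq_sym; apply: negbTE.
Qed.

Lemma qform_bananaQ x : qform (bananaQ g) x = \sum_j BTa x j ^+ 2.
Proof.
rewrite /qform /bananaQ.
have -> : x^T *m (Bq g *m (Bq g)^T) *m x = ((Bq g)^T *m x)^T *m ((Bq g)^T *m x).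
  by rewrite trmx_mul trmxK !mulmxA.
by rewrite mxE; apply: eq_bigr => j _; rewrite [in LHS]mxE expr2.
Qed.

Lemma qform_bananaQE x :
  qform (bananaQ g) x = (\sum_i x i 0) ^+ 2 + \sum_i x i 0 ^+ 2.
Proof.
rewrite qform_bananaQ big_ord_recl BTa_ord0; congr (_ + _).
by apply: eq_bigr => i _; rewrite BTa_lift sqrrN.
Qed.

Definition kratio k : rat := k%:R / g.+1%:R.
Definition khi k : rat := (g.+1 - k)%:R / g.+1%:R.
Definition kup k a (i : 'I_g) : bool := a i 0 == khi k.

Lemma natr_kratio k : k%:R = kratio k * g.+1%:R.
Proof. by rewrite /kratio divfK // pnatr_eq0. Qed.

Lemma khiE k : (k <= g.+1)%N -> khi k = 1 - kratio k.
Proof. by move=> kg; rewrite /khi natrB // mulrBl divff // pnatr_eq0. Qed.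

Lemma kratio_inj : injective kratio.
Proof.
move=> k k' /(congr1 ( *%R^~ g.+1%:R)); rewrite -!natr_kratio.
by move/eqP; rewrite eqr_nat => /eqP.
Qed.

Section KsetVertex.
Variables (k : nat) (a : 'cV[rat]_g).
Hypotheses (k_range : (1 <= k <= g)%N) (a_k : kset g k a).

Let k_gt0 : (0 < k)%N. Proof. by case/andP: k_range. Qed.

Lemma kratio_gt0 : 0 < kratio k.
Proof. by case/andP: k_range => k1 _; rewrite divr_gt0 ?ltr0n. Qed.

Lemma kratio_lt1 : kratio k < 1.
Proof.
by case/andP: k_range => _ kg; rewrite ltr_pdivrMr ?ltr0n // mul1r ltr_nat ltnS.
Qed.

Lemma kset_entry i : a i 0 = (kup k a i)%:R - kratio k.
Proof.
have hi : khi k = 1 - kratio k by case/andP: k_range => _ kg; rewrite khiE // ltnW.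
case: a_k => /(_ i); rewrite /kup -/(kratio k) -/(khi k) hi => -[] -> _.
  suff /negbTE -> : - kratio k != 1 - kratio k by rewrite sub0r.
  by apply/eqP => ?; lra.
by rewrite eqxx.
Qed.

Lemma kset_into_v1_lift i : into_v1 a (lift ord0 i) = ~~ kup k a i.
Proof.
have [t_gt0 t_lt1] := (kratio_gt0, kratio_lt1).
by rewrite /into_v1 BTa_lift kset_entry; case: kup => /=; apply/idP/idP; lra.
Qed.

Lemma kset_card : #|[set i | kup k a i]| = k \/ #|[set i | kup k a i]| = k.-1.
Proof. by case: a_k. Qed.

Lemma kset_sum : \sum_i a i 0 = #|[set i | kup k a i]|%:R - kratio k * g%:R.
Proof.
rewrite (eq_bigr _ (fun i _ => kset_entry i)) sumrB sumr_const card_ord.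
by rewrite -natr_sum -card_set_sum mulr_natr.
Qed.

Lemma kset_into_v1_ord0 : into_v1 a ord0 = (#|[set i | kup k a i]| == k).
Proof.
have [t_gt0 t_lt1] := (kratio_gt0, kratio_lt1).
rewrite /into_v1 BTa_ord0 kset_sum.
case: kset_card => ->.
  by rewrite eqxx (natr_kratio k) -natr1 mulrDr mulr1; apply/idP; lra.
rewrite (_ : k.-1 == k = false); last by lia.
by rewrite -subn1 natrB // (natr_kratio k) -natr1 mulrDr mulr1; apply/negbTE; lra.
Qed.

Lemma kset_outdeg : outdeg_v1 (orient a) = k.
Proof.
rewrite orientE outdeg_banana_orient card_set_ord_recl kset_into_v1_ord0.
have -> : #|[set i | ~~ into_v1 a (lift ord0 i)]| = #|[set i | kup k a i]|.
  by apply: eq_card => i; rewrite !inE kset_into_v1_lift negbK.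
by case: kset_card => ->; rewrite ?eqxx //; lia.
Qed.

Lemma kset_qform : qform (bananaQ g) a = kratio k * (1 - kratio k) * g.+1%:R.
Proof.
have entry_sq i : a i 0 ^+ 2 = (kup k a i)%:R * (1 - 2 * kratio k) + kratio k ^+ 2.
  by rewrite kset_entry; case: kup => /=; ring.
rewrite qform_bananaQE kset_sum (eq_bigr _ (fun i _ => entry_sq i)) big_split /=.
rewrite -mulr_suml -natr_sum -card_set_sum sumr_const card_ord -mulr_natr.
case: kset_card => ->; last rewrite -subn1 natrB //.
all: rewrite (natr_kratio k) -natr1; ring.
Qed.

End KsetVertex.

Lemma kset_into_v1_inj k a a' : (1 <= k <= g)%N -> kset g k a -> kset g k a' ->
  into_v1 a =1 into_v1 a' -> a = a'.
Proof.
move=> k_range a_k a'_k same_orient; apply/matrixP => i j; rewrite [j]ord1.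
have := same_orient (lift ord0 i).
rewrite (kset_into_v1_lift k_range a_k) (kset_into_v1_lift k_range a'_k).
by rewrite (kset_entry k_range a_k) (kset_entry k_range a'_k) => /negb_inj ->.
Qed.

Lemma kset_simV k a a' : (1 <= k <= g)%N -> kset g k a -> kset g k a' -> simV a a'.
Proof.
move=> k_range a_k a'_k.
pose c : 'cV[int]_g := \col_i ((kup k a i)%:Z - (kup k a' i)%:Z).
have a'E : a' = a - intvec c.
  apply/matrixP => i j; rewrite [j]ord1 !mxE intrB /=.
  by rewrite (kset_entry k_range a_k) (kset_entry k_range a'_k); ring.
exists c; split => //.
by rewrite /DaQ -a'E (kset_qform k_range a_k) (kset_qform k_range a'_k).
Qed.

Lemma kset_translate_eq k k' a c : (0 < g)%N ->
  (1 <= k <= g)%N -> (1 <= k' <= g)%N ->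
  kset g k a -> kset g k' (a - intvec c) -> k = k'.
Proof.
move=> g_gt0 k_range k'_range a_k a'_k; apply: kratio_inj.
pose i0 := Ordinal g_gt0.
have := kset_entry k'_range a'_k i0; rewrite !mxE (kset_entry k_range a_k) => entry.
pose w : int := c i0 0 + (kup k' (a - intvec c) i0)%:Z - (kup k a i0)%:Z.
have tw : kratio k' - kratio k = w%:~R by rewrite /w intrB intrD -!pmulrn; lra.
have [t_gt0 t_lt1] := (kratio_gt0 k_range, kratio_lt1 k_range).
have [t'_gt0 t'_lt1] := (kratio_gt0 k'_range, kratio_lt1 k'_range).
have : w%:~R < 1 :> rat by rewrite -tw; lra.
have : (- w)%:~R < 1 :> rat by rewrite intrN -tw; lra.
rewrite !ltrz1 => ? ?; have w0 : w = 0 by lia.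
by apply/esym/eqP; rewrite -subr_eq0 tw w0.
Qed.

Lemma vertex_kset_outdeg a : is_vertex a -> kset g (outdeg_v1 (orient a)) a.
Proof. by case=> k k_range a_k; rewrite (kset_outdeg k_range a_k). Qed.

Lemma vertex_simV_outdeg a a' : (0 < g)%N ->
  is_vertex a -> is_vertex a' ->
  simV a a' <-> outdeg_v1 (orient a) = outdeg_v1 (orient a').
Proof.
move=> g_gt0 [k k_range a_k] [k' k'_range a'_k].
rewrite (kset_outdeg k_range a_k) (kset_outdeg k'_range a'_k).
split=> [[c [_ a'E]] | kk'].
  by rewrite a'E in a'_k; apply: kset_translate_eq a'_k.
by rewrite -kk' in a'_k; apply: kset_simV a_k a'_k.
Qed.

Lemma vertex_into_v1_inj a a' : is_vertex a -> is_vertex a' ->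
  into_v1 a =1 into_v1 a' -> a = a'.
Proof.
move=> [k k_range a_k] [k' k'_range a'_k] same_orient.
have kk' : k = k'.
  rewrite -(kset_outdeg k_range a_k) -(kset_outdeg k'_range a'_k) !orientE.
  by rewrite !outdeg_banana_orient; apply: eq_card => j; rewrite !inE same_orient.
by rewrite -kk' in a'_k; apply: kset_into_v1_inj a_k a'_k same_orient.
Qed.

Lemma diff_edgesE a a' :
  diff_edges a a' = [set j | into_v1 a' j != into_v1 a j].
Proof. by apply/setP => j; rewrite !inE !orientE banana_orient_neq. Qed.

End BananaLattice.

Theorem corollary3p11 (g : nat) (hg : (1 <= g)%N) :
  (forall (a a' : 'cV[rat]_g), is_vertex a -> is_vertex a' ->
     forall k : nat, (1 <= k <= g)%N ->
       ((simV a a' /\ kset g k a /\ kset g k a') <->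
        (outdeg_v1 (orient a) = k /\ outdeg_v1 (orient a') = k)))
  /\
  (forall (a a' : 'cV[rat]_g), is_vertex a -> is_vertex a' -> a != a' ->
       (simV a a' <-> is_circuit (orient a) (diff_edges a a'))).
Proof.
split=> a a' va va'.
  move=> k k_range; split=> [[_ [a_k a'_k]] | [outdeg_a outdeg_a']].
    by rewrite (kset_outdeg k_range a_k) (kset_outdeg k_range a'_k).
  have := vertex_kset_outdeg va'; have := vertex_kset_outdeg va.
  rewrite outdeg_a outdeg_a' => a_k a'_k.
  by split; first exact: kset_simV a_k a'_k.
move=> a_neq_a'.
rewrite (vertex_simV_outdeg hg va va') diff_edgesE !orientE circuit_banana_orientP.
rewrite !outdeg_banana_orient.
split=> [/eq_card_predC_flips balanced | [_ /eq_card_predC_flips]] //.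
split=> //; apply: contra a_neq_a' => /eqP no_flips.
apply/eqP/vertex_into_v1_inj => // j; apply/esym/eqP.
by move/setP: no_flips => /(_ j); rewrite !inE => /negbFE.
Qed.
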